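(* Let $c,d\in\mathbb{R}_{>0}$ with $cd\le\frac14$. Consider a sequence of positive reals $z_0,z_1,z_2,\ldots$ with $z_0\le\frac1{2d}$ and $z_{n+1}\le c+dz_n^2$ for all $n\ge0$. Then $z_n\le3c$ for all $n\ge\log_2\frac1{cd}-1$. *)

From Stdlib Require Import Reals.
Open Scope R_scope.

Definition log2 (x : R) : R := ln x / ln 2.

From Stdlib Require Import Reals Lra Lia.
Open Scope R_scope.

(* Rescaling by d turns the recursion into w_{n+1} <= a + w_n^2 with a = cd <= 1/4
   and w_0 <= 1/2.  Writing b = 1/4 - a, one gets w_{n+1} <= 2a + b^(2^n): the
   error term is squared at every step, so it drops below a, i.e. w_n <= 3a, once
   2^(n+1) >= 1/a. *)

Lemma pow_pow2_le_self (b : R) (m : nat) : 0 <= b <= 1 -> b ^ (2 ^ m) <= b.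
Proof.
  intros hb.
  destruct (2 ^ m)%nat as [|k] eqn:E.
  - pose proof (Nat.pow_nonzero 2 m); lia.
  - assert (hbk : b ^ k <= 1) by (rewrite <- (pow1 k); apply pow_incr; lra).
    simpl; nra.
Qed.

Section QuadraticRecursion.

Variables (a : R) (w : nat -> R).
Hypotheses (ha : 0 <= a <= 1/4) (hw_nonneg : forall n, 0 <= w n)
  (hw0 : w 0%nat <= 1/2) (hw_step : forall n, w (S n) <= a + w n ^ 2).

Lemma quadratic_recursion_bound (n : nat) : w (S n) <= 2 * a + (1/4 - a) ^ (2 ^ n).
Proof.
  induction n as [|n IH].
  - pose proof (hw_step 0); pose proof (hw_nonneg 0); simpl; nra.
  - set (e := (1/4 - a) ^ (2 ^ n)) in IH.
    assert (he : 0 <= e <= 1/4 - a).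
    { split; [apply pow_le; lra | apply pow_pow2_le_self; lra]. }
    assert (hsq : w (S n) ^ 2 <= (2 * a + e) ^ 2).
    { pose proof (hw_nonneg (S n)); apply pow_incr; lra. }
    replace (2 ^ S n)%nat with (2 ^ n * 2)%nat by (simpl; lia).
    rewrite pow_mult; fold e.
    (* (2a + e)^2 - e^2 = 4a(a + e) <= a, because e <= 1/4 - a. *)
    pose proof (hw_step (S n)); nra.
Qed.

End QuadraticRecursion.

Lemma le_pow2_of_log2_le (x : R) (n : nat) : 0 < x -> log2 x <= INR n -> x <= 2 ^ n.
Proof.
  intros hx hlog; unfold log2 in hlog.
  assert (hln2 : 0 < ln 2) by (rewrite <- ln_1; apply ln_increasing; lra).
  destruct (Rle_lt_dec x (2 ^ n)) as [hle | hlt]; [exact hle | exfalso].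
  apply ln_increasing in hlt; [| apply pow_lt; lra].
  rewrite ln_pow in hlt by lra.
  apply Rmult_le_compat_r with (r := ln 2) in hlog; [| lra].
  unfold Rdiv in hlog; rewrite Rmult_assoc, Rinv_l in hlog by lra.
  lra.
Qed.

Lemma quarter_pow_pow2_le (m : nat) : (1/4) ^ (2 ^ m) <= / 2 ^ (S (S m)).
Proof.
  replace (1/4) with ((/2) ^ 2) by field.
  rewrite <- pow_mult, pow_inv.
  apply Rinv_le_contravar; [apply pow_lt; lra |].
  apply Rle_pow; [lra |].
  exact (Nat.pow_gt_lin_r 2 (S m) ltac:(lia)).
Qed.

Theorem lemma4p7 (c d : R) (z : nat -> R)
  (hc : 0 < c) (hd : 0 < d) (hcd : c * d <= 1/4)
  (hzpos : forall n : nat, 0 < z n)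
  (hz0 : z 0%nat <= 1 / (2 * d))
  (hrec : forall n : nat, z (S n) <= c + d * (z n) ^ 2) :
  forall n : nat, INR n >= log2 (1 / (c * d)) - 1 -> z n <= 3 * c.
Proof.
  intros n hn.
  set (a := c * d) in *.
  assert (ha : 0 < a) by (unfold a; nra).
  assert (hw : forall m, d * z (S m) <= 2 * a + (1/4 - a) ^ (2 ^ m)).
  { apply (quadratic_recursion_bound a (fun k => d * z k)); [lra | | |].
    - intro k; pose proof (hzpos k); nra.
    - replace (1/2) with (d * (1 / (2 * d))) by (field; lra).
      apply Rmult_le_compat_l; lra.
    - intro k; specialize (hrec k); unfold a.
      replace ((d * z k) ^ 2) with (d * (d * z k ^ 2)) by ring; nra. }
  assert (hscale : / 2 ^ S n <= a).
  { rewrite <- (Rinv_inv a); apply Rinv_le_contravar; [apply Rinv_0_lt_compat; lra |].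
    replace (/ a) with (1 / a) by (unfold Rdiv; ring).
    apply le_pow2_of_log2_le; [unfold Rdiv; rewrite Rmult_1_l; apply Rinv_0_lt_compat; lra |].
    rewrite S_INR; lra. }
  destruct n as [| m].
  - simpl in hscale; lra.
  - assert (herr : (1/4 - a) ^ (2 ^ m) <= / 2 ^ S (S m)).
    { apply Rle_trans with ((1/4) ^ (2 ^ m)); [apply pow_incr; lra | apply quarter_pow_pow2_le]. }
    apply Rmult_le_reg_l with (r := d); [exact hd |].
    pose proof (hw m); unfold a in *; lra.
Qed.
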